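(* Assume $p\ge2$ and $\hat\pi_k(x)>0$ for all $x\in\mathcal X_0$ and $k\in[1,p]$. Consider the following iteration for $T\ge1$: $\lambda_0(k)=1/p$, $g_0(x,k)=1/p$; for $t=0,\dots,T-1$: set $\ell_t(k)=D_{KL}(\hat{\mathsf p}_k\|\pi_{g_t})$; set $\lambda_{t+1}(k)=\lambda_t(k)e^{\eta_\lambda\ell_t(k)}/\sum_j\lambda_t(j)e^{\eta_\lambda\ell_t(j)}$; set $v_t(x,k)=-\frac{\hat{\mathsf p}_{\lambda_{t+1}}(x)}{\pi_{g_t}(x)}\hat\pi_k(x)$ for all $(x,k)\in\mathcal X_0\times[1,p]$; set $g_{t+1}=\Pi_{\mathcal G_1}(g_t-\eta_gv_t)$, where $\Pi_{\mathcal G_1}$ is the Euclidean projection onto $\mathcal G_1\subset\mathbb R^{\mathcal X_0\times[1,p]}$. Let $\bar g_T=\frac1T\sum_{t=1}^Tg_t$ and $\tilde V=\min_{g\in\mathcal G_1}\max_{\lambda\in\Delta}\tilde L(\lambda,g)$. Then there are constants $a,b,C>0$ depending only on $\mathcal G_1$, $\sup_{g\in\mathcal G_1,k}D_{KL}(\hat{\mathsf p}_k\|\pi_g)$ and $\sup_{g\in\mathcal G_1,\lambda\in\Delta}\|\nabla_g\tilde L(\lambda,g)\|_2$ (all finite under the positivity assumption) such that, with step sizes $\eta_\lambda=a/\sqrt T$ and $\eta_g=b/\sqrt T$, $$\max_{\lambda\in\Delta}\tilde L(\lambda,\bar g_T)-\tilde V\le C\sqrt{\frac{\log p}{T}} 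.$$
   Context: Fix an integer $p\ge 1$, $[1,p]=\{1,\dots,p\}$, $\Delta=\{\lambda\in\mathbb R^p:\lambda_k\ge 0,\ \sum_k\lambda_k=1\}$. Let $\hat{\mathsf p}_1,\dots,\hat{\mathsf p}_p$ be probability distributions with finite supports, $\mathcal X_0=\bigcup_k\mathrm{supp}(\hat{\mathsf p}_k)$, and $\hat\pi_1,\dots,\hat\pi_p$ probability distributions on $\mathcal X_0$. A gate is $g:\mathcal X_0\times[1,p]\to[0,1]$ with $\sum_kg(x,k)=1$ for each $x$; $\pi_g(x)=\sum_kg(x,k)\hat\pi_k(x)$, $Z_g=\sum_{x\in\mathcal X_0}\pi_g(x)$, $\mathcal G_1=\{g:Z_g=1\}$ (a compact convex subset of $\mathbb R^{\mathcal X_0\times[1,p]}$). For $\lambda\in\Delta$, $\hat{\mathsf p}_\lambda=\sum_k\lambda_k\hat{\mathsf p}_k$. $D_{KL}(P\|Q)=\sum_xP(x)\log\frac{P(x)}{Q(x)}$. The linearized payoff is $\tilde L(\lambda,g)=\sum_{k=1}^p\lambda_kD_{KL}(\hat{\mathsf p}_k\|\pi_g)$. *)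

From mathcomp Require Import all_boot all_order all_algebra.
From mathcomp Require Import all_classical all_reals.
From mathcomp Require Import sequences exp.
Set Implicit Arguments. Unset Strict Implicit. Unset Printing Implicit Defensive.
Import Order.TTheory GRing.Theory Num.Theory.
Local Open Scope classical_set_scope.
Local Open Scope ring_scope.

Section Defs.
Variables (R : realType) (X : finType) (p : nat).

(* A gate (or any point of R^{X0 x [1,p]}): indices [1,p] are 'I_p (0-based). *)
Definition gate := X -> 'I_p -> R.

(* KL divergence with the convention 0 log 0 = 0. *)
Definition KL (P Q : X -> R) : R :=
  \sum_(x | 0 < P x) P x * ln (P x / Q x).

Definition simplex : set ('I_p -> R) :=
  [set l | (forall k, 0 <= l k) /\ \sum_k l k = 1].

Definition is_gate (g : gate) : Prop :=
  (forall x k, 0 <= g x k <= 1) /\ (forall x, \sum_k g x k = 1).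

Variable pihat : 'I_p -> X -> R.

Definition pi_g (g : gate) (x : X) : R := \sum_k g x k * pihat k x.
Definition Z_g (g : gate) : R := \sum_x pi_g g x.

Definition G1 : set gate := [set g | is_gate g /\ Z_g g = 1].

Variable phat : 'I_p -> X -> R.

Definition p_mix (l : 'I_p -> R) (x : X) : R := \sum_k l k * phat k x.

Definition Ltilde (l : 'I_p -> R) (g : gate) : R :=
  \sum_k l k * KL (phat k) (pi_g g).

(* gradient of Ltilde in g, coordinate (x,k):
   d/dg(x,k) sum_j l_j D(phat_j || pi_g) = - p_l(x) pihat_k(x) / pi_g(x) *)
Definition gradg_Ltilde (l : 'I_p -> R) (g : gate) : gate :=
  fun x k => - (p_mix l x / pi_g g x) * pihat k x.

Definition gnorm (h : gate) : R := Num.sqrt (\sum_x \sum_k h x k ^+ 2).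

Definition is_proj (S : set gate) (y z : gate) : Prop :=
  S z /\ forall w, S w -> gnorm (fun x k => y x k - z x k)
                          <= gnorm (fun x k => y x k - w x k).

Definition Dmax : R :=
  sup [set d | exists g k, G1 g /\ d = KL (phat k) (pi_g g)].

Definition Gmax : R :=
  sup [set d | exists g l, G1 g /\ simplex l /\ d = gnorm (gradg_Ltilde l g)].

(* max_{l in Delta} Ltilde(l, g)  (the max is attained; sup = max) *)
Definition maxL (g : gate) : R := sup [set Ltilde l g | l in simplex].

Definition Vtilde : R := inf [set maxL g | g in G1].

Definition iteration (T : nat) (eta_l eta_g : R)
    (lam : nat -> 'I_p -> R) (g : nat -> gate) : Prop :=
  (forall k, lam 0%N k = p%:R^-1) /\
  (forall x k, g 0%N x k = p%:R^-1) /\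
  forall t, (t < T)%N ->
    let ell := fun k => KL (phat k) (pi_g (g t)) in
    (forall k, lam t.+1 k =
       lam t k * expR (eta_l * ell k) /
       \sum_j lam t j * expR (eta_l * ell j)) /\
    let v := fun x k => - (p_mix (lam t.+1) x / pi_g (g t) x) * pihat k x in
    is_proj G1 (fun x k => g t x k - eta_g * v x k) (g t.+1).

Definition gbar (T : nat) (g : nat -> gate) : gate :=
  fun x k => T%:R^-1 * \sum_(1 <= t < T.+1) g t x k.

End Defs.

(* Both players run no-regret dynamics on the payoff Ltilde, which is linear in lambda
   and convex in g (g |-> -ln pi_g x is convex, pi_g being linear in g).  The lambda
   player runs Hedge: telescoping ln lambda_t and Gibbs' inequality bound its regret by
   ln p / eta, even against the payoffs at lambda_(t+1) that the g player then sees.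
   The g player runs projected gradient descent on the convex set G1: the projection
   does not increase distances to points of G1, so its regret is at most
   diam(G1)^2 / (2 eta) + eta T Gmax^2 / 2.  Adding the two regrets and using Jensen's
   inequality for the average gbar_T gives, for every lambda and every w in G1,
   T (Ltilde lambda gbar_T - max_lambda' Ltilde lambda' w) = O(1/eta + eta T), which is
   O(sqrt T) for eta = 1/sqrt T. *)

From Pilot Require Import Defs.
From mathcomp Require Import all_boot all_order all_algebra.
From mathcomp Require Import all_classical all_reals.
From mathcomp Require Import sequences exp.
From mathcomp Require Import ring lra.
Import Order.TTheory GRing.Theory Num.Theory.
Set Implicit Arguments. Unset Strict Implicit. Unset Printing Implicit Defensive.
Local Open Scope ring_scope.

Section Elementary.
Variable R : realType.

Lemma ln_le_subr1 (x : R) : 0 < x -> ln x <= x - 1.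
Proof.
by move=> x0; have := @le_ln1Dx R (x - 1); rewrite addrCA subrr addr0; apply; lra.
Qed.

Lemma mulr_ln_div_le (a b : R) : 0 < a -> 0 < b -> a * ln (b / a) <= b - a.
Proof.
move=> a0 b0; have := ler_wpM2l (ltW a0) (ln_le_subr1 (divr_gt0 b0 a0)).
by rewrite mulrBr mulr1 mulrCA mulfV ?gt_eqF // mulr1.
Qed.

Lemma ler_term_sum (I : finType) (F : I -> R) i :
  (forall j, 0 <= F j) -> F i <= \sum_j F j.
Proof. by move=> F0; rewrite (bigD1 i) //= lerDl sumr_ge0. Qed.

Lemma sum_pos_support (I : finType) (F G : I -> R) :
  (forall i, 0 <= F i) -> \sum_(i | 0 < F i) F i * G i = \sum_i F i * G i.
Proof.
move=> F0; rewrite big_mkcond /=; apply: eq_bigr => i _.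
by case: ltP => // Fi; rewrite (@le_anti _ _ (F i) 0) ?F0 ?Fi // mul0r.
Qed.

Lemma sum_mul_ln_div_le (I : finType) (P Q : I -> R) :
  (forall i, 0 <= P i) -> (forall i, 0 < Q i) ->
  \sum_(i | 0 < P i) P i * ln (Q i / P i) <= \sum_i Q i - \sum_i P i.
Proof.
move=> P0 Q0; apply: (le_trans (ler_sum _ (fun i Pi => mulr_ln_div_le Pi (Q0 i)))).
rewrite -sumrB [leRHS](bigID (fun i => 0 < P i)) /= lerDl.
apply: sumr_ge0 => i /negbTE Pi.
have -> : P i = 0 by apply/eqP; rewrite eq_le P0 andbT leNgt Pi.
by rewrite subr0 ltW.
Qed.

Lemma sum_inv_card (p : nat) : (0 < p)%N -> \sum_(k < p) (p%:R^-1 : R) = 1.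
Proof.
by move=> p_gt0; rewrite sumr_const card_ord -[_ *+ p]mulr_natl mulfV ?gt_eqF ?ltr0n.
Qed.

End Elementary.

Section GateGeometry.
Variables (R : realType) (X : finType) (p : nat).
Local Notation gate := (gate R X p).

Definition gsub (a b : gate) : gate := fun x k => a x k - b x k.
Definition sqnorm (h : gate) : R := \sum_x \sum_k h x k ^+ 2.
Definition gdot (a b : gate) : R := \sum_x \sum_k a x k * b x k.

Definition gate_convex (S : set gate) : Prop :=
  forall z w s, S z -> S w -> 0 <= s <= 1 -> S (fun x k => z x k + s * (w x k - z x k)).

Lemma sqnorm_ge0 h : 0 <= sqnorm h.
Proof. by apply: sumr_ge0 => x _; apply: sumr_ge0 => k _; apply: sqr_ge0. Qed.

Lemma gnorm_sqnorm h : Defs.gnorm h ^+ 2 = sqnorm h.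
Proof. by rewrite sqr_sqrtr // sqnorm_ge0. Qed.

Lemma ler_gnorm_sqnorm a b : Defs.gnorm a <= Defs.gnorm b -> sqnorm a <= sqnorm b.
Proof. by rewrite /Defs.gnorm ler_sqrt // sqnorm_ge0. Qed.

Lemma eq_sqnorm a b : (forall x k, a x k ^+ 2 = b x k ^+ 2) -> sqnorm a = sqnorm b.
Proof. by move=> ab; apply: eq_bigr => x _; apply: eq_bigr => k _. Qed.

Lemma gdotC a b : gdot a b = gdot b a.
Proof. by apply: eq_bigr => x _; apply: eq_bigr => k _; rewrite mulrC. Qed.

Lemma gdot_sumr (I : Type) (r : seq I) h (F : I -> gate) :
  \sum_(i <- r) gdot h (F i) = gdot h (fun x k => \sum_(i <- r) F i x k).
Proof.
rewrite exchange_big; apply: eq_bigr => x _.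
by rewrite exchange_big; apply: eq_bigr => k _; rewrite mulr_sumr.
Qed.

Lemma sqnormB_scale a b s :
  sqnorm (fun x k => a x k - s * b x k) = sqnorm a - 2 * s * gdot a b + s ^+ 2 * sqnorm b.
Proof.
rewrite /sqnorm /gdot !mulr_sumr -sumrN -!big_split /=; apply: eq_bigr => x _.
by rewrite !mulr_sumr -sumrN -!big_split /=; apply: eq_bigr => k _; ring.
Qed.

Section Projection.
Variables (S : set gate) (y z : gate).
Hypotheses (S_convex : gate_convex S) (z_proj : is_proj S y z).

(* Minimality of |y - z| against the points z + s (w - z) of S, for small s > 0. *)
Lemma proj_obtuse w : S w -> gdot (gsub y z) (gsub w z) <= 0.
Proof.
move=> Sw; set e := gsub y z; set d := gsub w z.
have step s : 0 < s <= 1 -> 2 * gdot e d <= s * sqnorm d.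
  move=> /andP[s0 s1]; have s01 : 0 <= s <= 1 by rewrite ltW.
  have E : sqnorm (fun x k => y x k - (z x k + s * (w x k - z x k))) =
           sqnorm (fun x k => e x k - s * d x k).
    by apply: eq_sqnorm => x k; rewrite /e /d /gsub; congr (_ ^+ 2); ring.
  have := ler_gnorm_sqnorm (z_proj.2 _ (S_convex z_proj.1 Sw s01)).
  rewrite E sqnormB_scale -/(gsub y z) -/e => H.
  rewrite -(ler_pM2l s0) mulrA [s * 2]mulrC mulrA -expr2; lra.
rewrite leNgt; apply/negP => ed0.
have d0 := sqnorm_ge0 d.
have den : 0 < gdot e d + sqnorm d by lra.
have s0 : 0 < gdot e d / (gdot e d + sqnorm d) by rewrite divr_gt0.
have s1 : gdot e d / (gdot e d + sqnorm d) <= 1 by rewrite ler_pdivrMr // mul1r; lra.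
have := step _ (introT andP (conj s0 s1)).
rewrite mulrAC ler_pdivlMr //; nra.
Qed.

Lemma proj_sqnorm_le w : S w -> sqnorm (gsub z w) <= sqnorm (gsub y w).
Proof.
move=> Sw; have := proj_obtuse Sw.
rewrite (@eq_sqnorm (gsub y w) (fun x k => gsub y z x k - 1 * gsub w z x k)); last first.
  by move=> x k; rewrite /gsub; congr (_ ^+ 2); ring.
rewrite sqnormB_scale (@eq_sqnorm (gsub z w) (gsub w z)); last first.
  by move=> x k; rewrite /gsub; ring.
have := sqnorm_ge0 (gsub y z); rewrite expr2; lra.
Qed.

End Projection.

Lemma ogd_regret (S : set gate) (T : nat) (eta : R) (g v : nat -> gate) w :
  gate_convex S ->
  (forall t, (t < T)%N -> is_proj S (fun x k => g t x k - eta * v t x k) (g t.+1)) ->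
  S w ->
  2 * eta * \sum_(0 <= t < T) gdot (v t) (gsub (g t) w) <=
  sqnorm (gsub (g 0%N) w) + eta ^+ 2 * \sum_(0 <= t < T) sqnorm (v t).
Proof.
move=> Sc proj Sw.
have step t : (t < T)%N -> 2 * eta * gdot (v t) (gsub (g t) w) <=
    (sqnorm (gsub (g t) w) - sqnorm (gsub (g t.+1) w)) + eta ^+ 2 * sqnorm (v t).
  move=> tT; have := proj_sqnorm_le Sc (proj t tT) Sw.
  rewrite (@eq_sqnorm (gsub (fun x k => g t x k - eta * v t x k) w)
                      (fun x k => gsub (g t) w x k - eta * v t x k)); last first.
    by move=> x k; rewrite /gsub; congr (_ ^+ 2); ring.
  rewrite sqnormB_scale gdotC; lra.
have := @ler_sum_nat _ 0 T _ _ (fun t ht => step t (proj2 (andP ht))).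
rewrite big_split /= -!mulr_sumr.
rewrite (@telescope_sumr_eq _ 0 T (fun t => - sqnorm (gsub (g t) w))
           (fun t => sqnorm (gsub (g t) w) - sqnorm (gsub (g t.+1) w))) //; last first.
  by move=> t _; rewrite opprK addrC.
have := sqnorm_ge0 (gsub (g T) w); lra.
Qed.

End GateGeometry.

Section Hedge.
Variables (R : realType) (p T : nat) (eta : R) (lam ell : nat -> 'I_p -> R).
Hypotheses (p_gt0 : (0 < p)%N) (lam0 : forall k, lam 0%N k = p%:R^-1).
Hypothesis lam_step : forall t, (t < T)%N -> forall k,
  lam t.+1 k = lam t k * expR (eta * ell t k) / \sum_j lam t j * expR (eta * ell t j).

Lemma hedge_normaliser_gt0 t :
  (forall k, 0 < lam t k) -> 0 < \sum_j lam t j * expR (eta * ell t j).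
Proof.
move=> l0; apply: (lt_le_trans _ (ler_term_sum (Ordinal p_gt0) _)).
  by rewrite mulr_gt0 ?expR_gt0.
by move=> j; rewrite ltW ?mulr_gt0 ?expR_gt0.
Qed.

Lemma hedge_simplex t : (t <= T)%N -> (forall k, 0 < lam t k) /\ \sum_k lam t k = 1.
Proof.
elim: t => [_|t IH tT].
  split=> [k|]; first by rewrite lam0 invr_gt0 ltr0n.
  by under eq_bigr do rewrite lam0; exact: sum_inv_card.
have [l0 l1] := IH (ltnW tT); have Z0 := hedge_normaliser_gt0 l0.
split=> [k|]; first by rewrite lam_step // divr_gt0 ?mulr_gt0 ?expR_gt0.
by under eq_bigr do rewrite lam_step //; rewrite -mulr_suml mulfV ?gt_eqF.
Qed.

(* With Z_t the normaliser, ln lam_(t+1) - ln lam_t = eta ell_t - ln Z_t, and Gibbs'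
   inequality for lam_(t+1) against lam_t gives ln Z_t <= eta <lam_(t+1), ell_t>;
   the telescoped sum of ln lam_t k is at most ln 1 - ln (1/p). *)
Lemma hedge_regret k :
  eta * \sum_(0 <= t < T) ell t k <=
  ln p%:R + eta * \sum_(0 <= t < T) \sum_j lam t.+1 j * ell t j.
Proof.
pose Z t := \sum_j lam t j * expR (eta * ell t j).
have dlog t j : (t < T)%N -> ln (lam t.+1 j) - ln (lam t j) = eta * ell t j - ln (Z t).
  move=> tT; have [l0 _] := hedge_simplex (ltnW tT); have Z0 := hedge_normaliser_gt0 l0.
  rewrite lam_step // ln_div ?posrE ?mulr_gt0 ?expR_gt0 // lnM ?posrE ?expR_gt0 // expRK.
  by ring.
have step t : (t < T)%N ->
    eta * ell t k - eta * \sum_j lam t.+1 j * ell t j <= ln (lam t.+1 k) - ln (lam t k).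
  move=> tT; rewrite dlog //.
  have [l0 l1] := hedge_simplex (ltnW tT); have [m0 m1] := hedge_simplex tT.
  have := sum_mul_ln_div_le (fun j => ltW (m0 j)) l0.
  rewrite sum_pos_support => [|j]; last exact: ltW (m0 j).
  rewrite l1 m1 subrr.
  under eq_bigr => j _ do rewrite ln_div ?posrE // -opprB dlog // opprB mulrBr.
  rewrite sumrB -mulr_suml m1 mul1r mulr_sumr.
  under [X in _ - X]eq_bigr do rewrite mulrCA.
  lra.
have := @ler_sum_nat _ 0 T _ _ (fun t ht => step t (proj2 (andP ht))).
rewrite telescope_sumr // sumrB -!mulr_sumr lam0 lnV ?posrE ?ltr0n //.
have [lT0 lT1] := hedge_simplex (leqnn T).
have : ln (lam T k) <= 0.
  by apply: ln_le0; rewrite -lT1 ler_term_sum // => j; exact: ltW.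
lra.
Qed.

End Hedge.

Lemma KL_sum (R : realType) (X : finType) (P Q : X -> R) :
  (forall x, 0 <= P x) -> KL P Q = \sum_x P x * ln (P x / Q x).
Proof. by move=> P0; rewrite /KL sum_pos_support. Qed.

Lemma simplex_le1 (R : realType) (p : nat) (l : 'I_p -> R) k : simplex l -> l k <= 1.
Proof. by move=> [l0 l1]; rewrite -l1 ler_term_sum. Qed.

(* The four terms come from the Hedge regret, the squared diameter of G1, the
   gradient steps of OGD, and the shift from g_0..g_(T-1) to g_1..g_T in gbar. *)
Definition rate_const (R : realType) (X : finType) (p : nat) (Dm Gm : R) : R :=
  ln p%:R + (#|X| * p)%:R / 2 + Gm ^+ 2 / 2 + `|Dm|.

Lemma rate_const_gt0 (R : realType) (X : finType) (p : nat) (Dm Gm : R) :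
  (1 < p)%N -> 0 < rate_const X p Dm Gm.
Proof.
move=> p_gt1; have : 0 < ln (p%:R : R) by rewrite ln_gt0 // ltr1n.
have := normr_ge0 Dm; have := sqr_ge0 Gm; have := ler0n R (#|X| * p).
rewrite /rate_const; lra.
Qed.

Section Payoff.
Variables (R : realType) (X : finType) (p : nat) (pihat phat : 'I_p -> X -> R).
Hypotheses (pihat_gt0 : forall k x, 0 < pihat k x) (pihat_sum1 : forall k, \sum_x pihat k x = 1).
Hypotheses (phat_ge0 : forall k x, 0 <= phat k x) (phat_sum1 : forall k, \sum_x phat k x = 1).
Local Notation gate := (gate R X p).

Definition stochastic (g : gate) : Prop :=
  (forall x k, 0 <= g x k) /\ (forall x, \sum_k g x k = 1).

Lemma G1_stochastic g : G1 pihat g -> stochastic g.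
Proof. by move=> [[g01 g1] _]; split=> // x k; case/andP: (g01 x k). Qed.

Lemma G1_convex : gate_convex (G1 pihat).
Proof.
have sum_comb (I : finType) (s : R) (F G : I -> R) :
    \sum_i (F i + s * (G i - F i)) = \sum_i F i + s * (\sum_i G i - \sum_i F i).
  by rewrite -sumrB mulr_sumr -big_split.
move=> z w s [[z01 z1] zZ] [[w01 w1] wZ] /andP[s0 s1]; split; first split.
- move=> x k; case/andP: (z01 x k) => ? ?; case/andP: (w01 x k) => ? ?.
  by apply/andP; split; nra.
- by move=> x; rewrite sum_comb z1 w1 subrr mulr0 addr0.
have pi_comb x : pi_g pihat (fun x k => z x k + s * (w x k - z x k)) x =
    pi_g pihat z x + s * (pi_g pihat w x - pi_g pihat z x).
  by rewrite /pi_g -sum_comb; apply: eq_bigr => k _; ring.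
rewrite /Z_g; under eq_bigr do rewrite pi_comb.
by rewrite sum_comb -/(Z_g pihat z) -/(Z_g pihat w) zZ wZ subrr mulr0 addr0.
Qed.

Lemma uniform_gate_G1 (g : gate) :
  (0 < p)%N -> (forall x k, g x k = p%:R^-1) -> G1 pihat g.
Proof.
move=> p_gt0 gE; split; first split.
- by move=> x k; rewrite gE invr_ge0 ler0n /= invf_le1 ?ltr0n // ler1n.
- by move=> x; under eq_bigr do rewrite gE; exact: sum_inv_card.
rewrite /Z_g /pi_g; under eq_bigr do under eq_bigr do rewrite gE.
rewrite exchange_big /=; under eq_bigr do rewrite -mulr_sumr pihat_sum1 mulr1.
exact: sum_inv_card.
Qed.

Lemma pihat_le1 k x : pihat k x <= 1.
Proof. by rewrite -(pihat_sum1 k) ler_term_sum // => y; exact: ltW. Qed.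

Lemma phat_le1 k x : phat k x <= 1.
Proof. by rewrite -(phat_sum1 k) ler_term_sum. Qed.

(* A lower bound on pi_g x uniform in the gate: as pihat <= 1, the product over k is
   below every pihat k x, hence below any convex combination of them. *)
Definition pihat_floor (x : X) : R := \prod_k pihat k x.

Lemma pihat_floor_gt0 x : 0 < pihat_floor x.
Proof. exact: prodr_gt0. Qed.

Lemma pihat_floor_le k x : pihat_floor x <= pihat k x.
Proof.
rewrite /pihat_floor (bigD1 k) //= -[leRHS]mulr1.
apply: ler_wpM2l; first exact: ltW.
by apply: prodr_ile1 => j _; rewrite ltW //= pihat_le1.
Qed.

Lemma pi_g_ge_floor g x : stochastic g -> pihat_floor x <= pi_g pihat g x.
Proof.
move=> [g0 g1]; rewrite -[leLHS]mul1r -(g1 x) mulr_suml.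
by apply: ler_sum => k _; rewrite ler_wpM2l ?pihat_floor_le.
Qed.

Lemma pi_g_gt0 g x : stochastic g -> 0 < pi_g pihat g x.
Proof. by move=> sg; apply: lt_le_trans (pihat_floor_gt0 x) (pi_g_ge_floor x sg). Qed.

Lemma inv_pi_g_le_floor g x : stochastic g -> (pi_g pihat g x)^-1 <= (pihat_floor x)^-1.
Proof.
by move=> sg; rewrite lef_pV2 ?posrE ?pi_g_gt0 ?pihat_floor_gt0 // pi_g_ge_floor.
Qed.

Lemma KL_ge0 g k : G1 pihat g -> 0 <= KL (phat k) (pi_g pihat g).
Proof.
move=> Gg; have sg := G1_stochastic Gg.
have := sum_mul_ln_div_le (phat_ge0 k) (fun x => pi_g_gt0 x sg).
rewrite -/(Z_g pihat g) Gg.2 phat_sum1 subrr.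
suff -> : KL (phat k) (pi_g pihat g) =
          - \sum_(x | 0 < phat k x) phat k x * ln (pi_g pihat g x / phat k x).
  by rewrite oppr_ge0.
rewrite -sumrN; apply: eq_bigr => x Px.
by rewrite -mulrN -lnV ?posrE ?divr_gt0 ?pi_g_gt0 // invf_div.
Qed.

Lemma KL_le_floor g k : stochastic g -> KL (phat k) (pi_g pihat g) <= \sum_x (pihat_floor x)^-1.
Proof.
move=> sg; rewrite KL_sum //; apply: ler_sum => x _.
have pi0 := pi_g_gt0 x sg; have inv_le := inv_pi_g_le_floor x sg.
have [P0|P0] := ltP 0 (phat k x); last first.
  rewrite (@le_anti _ _ (phat k x) 0) ?P0 ?phat_ge0 // mul0r invr_ge0.
  exact: ltW (pihat_floor_gt0 x).
have := ler_wpM2l (ltW P0) (ln_le_subr1 (divr_gt0 P0 pi0)).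
have PP : phat k x * phat k x <= 1 by have := phat_le1 k x; nra.
have ipi0 : 0 <= (pi_g pihat g x)^-1 by rewrite invr_ge0 ltW.
have := ler_wpM2r ipi0 PP; rewrite mul1r mulrBr mulr1 mulrA.
lra.
Qed.

Lemma KL_le_Dmax g k : G1 pihat g -> KL (phat k) (pi_g pihat g) <= Dmax pihat phat.
Proof.
move=> Gg; apply: ub_le_sup; last by exists g, k.
exists (\sum_x (pihat_floor x)^-1) => _ [g' [k' [Gg' ->]]].
exact: KL_le_floor (G1_stochastic Gg').
Qed.

Lemma Ltilde_ge0 l g : simplex l -> G1 pihat g -> 0 <= Ltilde pihat phat l g.
Proof. by move=> [l0 _] Gg; apply: sumr_ge0 => k _; rewrite mulr_ge0 ?KL_ge0. Qed.

Lemma Ltilde_le_Dmax l g : simplex l -> G1 pihat g -> Ltilde pihat phat l g <= Dmax pihat phat.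
Proof.
move=> [l0 l1] Gg; rewrite -[leRHS]mul1r -l1 mulr_suml.
by apply: ler_sum => k _; rewrite ler_wpM2l ?KL_le_Dmax.
Qed.

Lemma Ltilde_le_maxL l g : simplex l -> Ltilde pihat phat l g <= maxL pihat phat g.
Proof.
move=> sl; apply: ub_le_sup; last by exists l.
exists (\sum_k `|KL (phat k) (pi_g pihat g)|) => _ [l' sl' <-].
apply: ler_sum => k _; have := sl'.1 k; have := simplex_le1 k sl'.
have := ler_norm (KL (phat k) (pi_g pihat g)); have := normr_ge0 (KL (phat k) (pi_g pihat g)).
nra.
Qed.

Lemma gnorm_gradg_le_Gmax l g :
  simplex l -> G1 pihat g -> Defs.gnorm (gradg_Ltilde pihat phat l g) <= Gmax pihat phat.
Proof.
pose B := Num.sqrt (\sum_x \sum_(k < p) (pihat_floor x)^-1 ^+ 2).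
suff gradB l' g' : simplex l' -> stochastic g' -> Defs.gnorm (gradg_Ltilde pihat phat l' g') <= B.
  move=> sl Gg; apply: ub_le_sup; last by exists g, l.
  by exists B => _ [g' [l' [Gg' [sl' ->]]]]; exact: gradB sl' (G1_stochastic Gg').
move=> sl sg; rewrite ler_sqrt; last by apply: sumr_ge0 => x _; apply: sumr_ge0 => k _; exact: sqr_ge0.
apply: ler_sum => x _; apply: ler_sum => k _.
have pi0 := pi_g_gt0 x sg; have inv_le := inv_pi_g_le_floor x sg.
have m0 : 0 <= p_mix phat l' x by apply: sumr_ge0 => j _; rewrite mulr_ge0 ?sl.1.
have m1 : p_mix phat l' x <= 1.
  rewrite -sl.2; apply: ler_sum => j _.
  by rewrite -[leRHS]mulr1 ler_wpM2l ?sl.1 ?phat_le1.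
have pk0 := ltW (pihat_gt0 k x); have pk1 := pihat_le1 k x.
have ipi0 : 0 <= (pi_g pihat g' x)^-1 by rewrite invr_ge0 ltW.
have c0 : 0 <= p_mix phat l' x / pi_g pihat g' x * pihat k x by rewrite !mulr_ge0.
have c1 : p_mix phat l' x / pi_g pihat g' x * pihat k x <= (pihat_floor x)^-1.
  apply: le_trans inv_le; rewrite mulrAC -[leRHS]mul1r ler_wpM2r //; nra.
by rewrite /gradg_Ltilde mulNr sqrrN ler_sqr ?nnegrE // invr_ge0 ltW ?pihat_floor_gt0.
Qed.

Lemma sqnorm_gradg_le_Gmax l g :
  simplex l -> G1 pihat g -> sqnorm (gradg_Ltilde pihat phat l g) <= Gmax pihat phat ^+ 2.
Proof.
move=> sl Gg; have := gnorm_gradg_le_Gmax sl Gg; rewrite -gnorm_sqnorm.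
by have := sqrtr_ge0 (sqnorm (gradg_Ltilde pihat phat l g)); rewrite /Defs.gnorm; nra.
Qed.

Lemma Ltilde_subgradient l g w :
  (forall k, 0 <= l k) -> stochastic g -> stochastic w ->
  Ltilde pihat phat l g - Ltilde pihat phat l w <=
  gdot (gradg_Ltilde pihat phat l g) (gsub g w).
Proof.
move=> l0 sg sw.
have pg0 x := pi_g_gt0 x sg; have pw0 x := pi_g_gt0 x sw.
apply: (@le_trans _ _ (\sum_k l k * \sum_x phat k x *
          (pi_g pihat w x / pi_g pihat g x - 1))).
  rewrite -sumrB; apply: ler_sum => k _; rewrite -mulrBr ler_wpM2l //.
  rewrite !KL_sum // -sumrB; apply: ler_sum => x _; rewrite -mulrBr.
  have [P0|P0] := ltP 0 (phat k x); last first.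
    by rewrite (@le_anti _ _ (phat k x) 0) ?P0 ?phat_ge0 // !mul0r.
  rewrite ler_pM2l // !ln_div ?posrE //.
  have := ln_le_subr1 (divr_gt0 (pw0 x) (pg0 x)); rewrite ln_div ?posrE //; lra.
rewrite le_eqVlt; apply/orP; left; apply/eqP.
under eq_bigr do rewrite mulr_sumr.
rewrite exchange_big; apply: eq_bigr => x _.
transitivity (p_mix phat l x * (pi_g pihat w x / pi_g pihat g x - 1)).
  by rewrite /p_mix mulr_suml; apply: eq_bigr => k _; rewrite mulrA.
transitivity (- (p_mix phat l x / pi_g pihat g x) * (pi_g pihat g x - pi_g pihat w x)).
  by field; rewrite gt_eqF.
by rewrite /pi_g -sumrB mulr_sumr; apply: eq_bigr => k _; rewrite /gradg_Ltilde /gsub; ring.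
Qed.

Lemma gbar_stochastic T (g : nat -> gate) :
  (1 <= T)%N -> (forall t, (1 <= t <= T)%N -> stochastic (g t)) -> stochastic (gbar T g).
Proof.
move=> T1 sg; have T0 : (0 : R) < T%:R by rewrite ltr0n.
split=> [x k|x].
  rewrite mulr_ge0 ?invr_ge0 ?ler0n // big_nat_cond sumr_ge0 // => t /andP[tT _].
  exact: (sg t tT).1.
rewrite /gbar -mulr_sumr exchange_big /= big_nat_cond.
rewrite (eq_bigr (fun=> 1)) => [|t /andP[tT _]]; last exact: (sg t tT).2.
by rewrite -big_nat_cond sumr_const_nat subSS subn0; apply: mulVf; rewrite gt_eqF.
Qed.

(* Jensen's inequality, via the subgradient at the average. *)
Lemma Ltilde_gbar_le l T (g : nat -> gate) :
  (forall k, 0 <= l k) -> (1 <= T)%N -> (forall t, (1 <= t <= T)%N -> stochastic (g t)) ->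
  T%:R * Ltilde pihat phat l (gbar T g) <= \sum_(1 <= t < T.+1) Ltilde pihat phat l (g t).
Proof.
move=> l0 T1 sg; have T0 : (0 : R) < T%:R by rewrite ltr0n.
have sgbar := gbar_stochastic T1 sg.
have deviations0 : \sum_(1 <= t < T.+1)
    gdot (gradg_Ltilde pihat phat l (gbar T g)) (gsub (gbar T g) (g t)) = 0.
  rewrite gdot_sumr /gdot big1 // => x _; rewrite big1 // => k _.
  rewrite /gsub sumrB sumr_const_nat subSS subn0 {1}/gbar -[(_ * _) *+ T]mulr_natr.
  by rewrite [_ * T%:R]mulrAC mulVf ?gt_eqF // mul1r subrr mulr0.
have : \sum_(1 <= t < T.+1) (Ltilde pihat phat l (gbar T g) - Ltilde pihat phat l (g t)) <= 0.
  rewrite -[leRHS]deviations0 big_nat_cond [leRHS]big_nat_cond; apply: ler_sum => t /andP[tT _].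
  exact: Ltilde_subgradient (sg t tT).
rewrite sumrB sumr_const_nat subSS subn0 -[_ *+ T]mulr_natl; lra.
Qed.

Lemma uniform_simplex : (0 < p)%N -> simplex (fun _ : 'I_p => p%:R^-1 : R).
Proof.
by move=> p_gt0; split=> [k|]; [rewrite invr_ge0 ler0n | exact: sum_inv_card].
Qed.

Lemma maxL_le g c : (0 < p)%N ->
  (forall l, simplex l -> Ltilde pihat phat l g <= c) -> maxL pihat phat g <= c.
Proof.
move=> p_gt0 Lc; apply: ge_sup => [|_ [l sl <-]]; last exact: Lc.
by exists (Ltilde pihat phat (fun=> p%:R^-1) g), (fun=> p%:R^-1) => //;
  exact: uniform_simplex.
Qed.

Lemma le_Vtilde c : (0 < p)%N ->
  (forall w, G1 pihat w -> c <= maxL pihat phat w) -> c <= Vtilde pihat phat.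
Proof.
move=> p_gt0 cL; apply: lb_le_inf => [|_ [w Gw <-]]; last exact: cL.
by exists (maxL pihat phat (fun _ _ => p%:R^-1)), (fun _ _ => p%:R^-1) => //;
  exact: uniform_gate_G1.
Qed.

Lemma sqnorm_sub_G1_le z w : G1 pihat z -> G1 pihat w -> sqnorm (gsub z w) <= (#|X| * p)%:R.
Proof.
move=> [[z01 _] _] [[w01 _] _].
have -> : (#|X| * p)%:R = \sum_(x : X) \sum_(k < p) (1 : R).
  by rewrite !sumr_const card_ord natrM mulrC mulr_natr.
apply: ler_sum => x _; apply: ler_sum => k _.
by case/andP: (z01 x k) => ? ?; case/andP: (w01 x k) => ? ?; rewrite /gsub; nra.
Qed.

Section Iteration.
Variables (T : nat) (eta : R) (lam : nat -> 'I_p -> R) (g : nat -> gate).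
Hypotheses (p_gt0 : (0 < p)%N) (T_gt0 : (0 < T)%N) (eta_gt0 : 0 < eta).
Hypothesis iter : iteration pihat phat T eta eta lam g.

Lemma iteration_simplex t : (t <= T)%N -> simplex (lam t).
Proof.
have [lam0 [_ step]] := iter.
move=> tT; have [l0 l1] := hedge_simplex p_gt0 lam0 (fun t tT => (step t tT).1) tT.
by split=> // k; exact: ltW.
Qed.

Lemma iteration_proj t : (t < T)%N ->
  is_proj (G1 pihat) (fun x k => g t x k - eta * gradg_Ltilde pihat phat (lam t.+1) (g t) x k)
          (g t.+1).
Proof. by have [_ [_ step]] := iter; move=> tT; exact: (step t tT).2. Qed.

Lemma iteration_G1 t : (t <= T)%N -> G1 pihat (g t).
Proof.
have [_ [g0 _]] := iter.
by case: t => [_|t tT]; [exact: uniform_gate_G1 | exact: (iteration_proj tT).1].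
Qed.

Lemma iteration_hedge_regret l : simplex l ->
  eta * \sum_(0 <= t < T) Ltilde pihat phat l (g t) <=
  ln p%:R + eta * \sum_(0 <= t < T) Ltilde pihat phat (lam t.+1) (g t).
Proof.
have [lam0 [_ step]] := iter.
have regret k := hedge_regret p_gt0 lam0 (fun t tT => (step t tT).1) k.
move=> [l0 l1].
have -> : eta * \sum_(0 <= t < T) Ltilde pihat phat l (g t) =
          \sum_k l k * (eta * \sum_(0 <= t < T) KL (phat k) (pi_g pihat (g t))).
  rewrite /Ltilde exchange_big mulr_sumr; apply: eq_bigr => k _.
  by rewrite -!mulr_sumr mulrCA.
rewrite -[leRHS]mul1r -{1}l1 mulr_suml; apply: ler_sum => k _.
by rewrite ler_wpM2l ?regret.
Qed.

Lemma iteration_ogd_regret w : G1 pihat w ->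
  2 * eta * \sum_(0 <= t < T) Ltilde pihat phat (lam t.+1) (g t) <=
  2 * eta * (T%:R * maxL pihat phat w) + (#|X| * p)%:R + eta ^+ 2 * (T%:R * Gmax pihat phat ^+ 2).
Proof.
move=> Gw; set grad := fun t => gradg_Ltilde pihat phat (lam t.+1) (g t).
have := ogd_regret G1_convex iteration_proj Gw; rewrite -/grad.
have payoff_le : \sum_(0 <= t < T) Ltilde pihat phat (lam t.+1) (g t) <=
    T%:R * maxL pihat phat w + \sum_(0 <= t < T) gdot (grad t) (gsub (g t) w).
  have -> : T%:R * maxL pihat phat w = \sum_(0 <= t < T) maxL pihat phat w.
    by rewrite sumr_const_nat subn0 mulr_natl.
  rewrite -big_split /=.
  rewrite big_nat_cond [leRHS]big_nat_cond; apply: ler_sum => t /andP[/andP[_ tT] _].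
  have sl := iteration_simplex tT; have Gt := iteration_G1 (ltnW tT).
  have := Ltilde_subgradient sl.1 (G1_stochastic Gt) (G1_stochastic Gw).
  have := Ltilde_le_maxL w sl; lra.
have grad_le : \sum_(0 <= t < T) sqnorm (grad t) <= T%:R * Gmax pihat phat ^+ 2.
  have -> : T%:R * Gmax pihat phat ^+ 2 = \sum_(0 <= t < T) Gmax pihat phat ^+ 2.
    by rewrite sumr_const_nat subn0 mulr_natl.
  rewrite big_nat_cond [leRHS]big_nat_cond; apply: ler_sum => t /andP[/andP[_ tT] _].
  exact: sqnorm_gradg_le_Gmax (iteration_simplex tT) (iteration_G1 (ltnW tT)).
have := sqnorm_sub_G1_le (iteration_G1 (leq0n T)) Gw.
have := ler_wpM2l (sqr_ge0 eta) grad_le.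
have := ler_wpM2l (ltW (mulr_gt0 (ltr0Sn R 1) eta_gt0)) payoff_le.
rewrite mulrDr; lra.
Qed.

Lemma iteration_gbar_le l : simplex l ->
  T%:R * Ltilde pihat phat l (gbar T g) <=
  \sum_(0 <= t < T) Ltilde pihat phat l (g t) + Dmax pihat phat.
Proof.
move=> sl; apply: le_trans (Ltilde_gbar_le sl.1 T_gt0 _) _.
  by move=> t /andP[_ tT]; exact: G1_stochastic (iteration_G1 tT).
set F := fun t => Ltilde pihat phat l (g t).
have -> : \sum_(1 <= t < T.+1) F t = \sum_(0 <= t < T) F t + (F T - F 0%N).
  by rewrite big_add1 -(telescope_sumr _ (leq0n T)) -big_split /=; apply: eq_bigr => t _; ring.
have := Ltilde_ge0 sl (iteration_G1 (leq0n T)).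
have := Ltilde_le_Dmax sl (iteration_G1 (leqnn T)).
rewrite -/(F 0%N) -/(F T); lra.
Qed.

Lemma iteration_regret w l : G1 pihat w -> simplex l ->
  2 * eta * T%:R * (Ltilde pihat phat l (gbar T g) - maxL pihat phat w) <=
  2 * ln p%:R + (#|X| * p)%:R + eta ^+ 2 * T%:R * Gmax pihat phat ^+ 2 +
  2 * eta * Dmax pihat phat.
Proof.
move=> Gw sl; have := iteration_ogd_regret Gw.
have := ler_wpM2l (ltW eta_gt0) (iteration_gbar_le sl).
have := iteration_hedge_regret sl.
lra.
Qed.

End Iteration.

Lemma iteration_sqrt_regret T lam (g : nat -> gate) w l :
  (0 < p)%N -> (0 < T)%N ->
  iteration pihat phat T (1 / Num.sqrt T%:R) (1 / Num.sqrt T%:R) lam g ->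
  G1 pihat w -> simplex l ->
  Ltilde pihat phat l (gbar T g) - maxL pihat phat w <=
  rate_const X p (Dmax pihat phat) (Gmax pihat phat) / Num.sqrt T%:R.
Proof.
move=> p_gt0 T_gt0 iter Gw sl; pose r : R := Num.sqrt T%:R.
have r_gt0 : 0 < r by rewrite sqrtr_gt0 ltr0n.
have r_ge1 : 1 <= r by rewrite -sqrtr1 ler_sqrt ?ler1n.
have rr : r * r = T%:R by rewrite -expr2 sqr_sqrtr.
have := iteration_regret p_gt0 T_gt0 (divr_gt0 ltr01 r_gt0) iter Gw sl.
have eta_T : 1 / r * T%:R = r by rewrite -rr mulrA mul1r mulVf ?gt_eqF // mul1r.
have eta2_T : (1 / r) ^+ 2 * T%:R = 1 by rewrite -rr; field; rewrite gt_eqF.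
have Dm_le : 1 / r * Dmax pihat phat <= `|Dmax pihat phat|.
  rewrite mul1r mulrC ler_pdivrMr // (le_trans (ler_norm _)) //.
  by rewrite -[leLHS]mulr1 ler_wpM2l.
rewrite -(mulrA 2) eta_T eta2_T mul1r -/r ler_pdivlMr // /rate_const; lra.
Qed.

End Payoff.

Theorem mainTheorem12 (R : realType) (X : finType) (p : nat) :
  (2 <= p)%N ->
  exists a b C : set (gate R X p) -> R -> R -> R,
  forall (phat pihat : 'I_p -> X -> R),
    (forall k x, 0 <= phat k x) -> (forall k, \sum_x phat k x = 1) ->
    (forall x, exists k, 0 < phat k x) ->
    (forall k x, 0 < pihat k x) -> (forall k, \sum_x pihat k x = 1) ->
    let G := G1 pihat in
    let Dm := Dmax pihat phat in
    let Gm := Gmax pihat phat in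
    0 < a G Dm Gm /\ 0 < b G Dm Gm /\ 0 < C G Dm Gm /\
    forall (T : nat) (lam : nat -> 'I_p -> R) (g : nat -> gate R X p),
      (1 <= T)%N ->
      iteration pihat phat T (a G Dm Gm / Num.sqrt T%:R)
                             (b G Dm Gm / Num.sqrt T%:R) lam g ->
      maxL pihat phat (gbar T g) - Vtilde pihat phat
        <= C G Dm Gm * Num.sqrt (ln p%:R / T%:R).
Proof.
move=> p_gt1; have p_gt0 : (0 < p)%N by apply: leq_trans p_gt1.
have lnp_gt0 : 0 < ln (p%:R : R) by rewrite ln_gt0 // ltr1n.
exists (fun _ _ _ => 1), (fun _ _ _ => 1),
  (fun _ Dm Gm => rate_const X p Dm Gm / Num.sqrt (ln p%:R)).
move=> phat pihat phat_ge0 phat_sum1 _ pihat_gt0 pihat_sum1 G Dm Gm /=.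
split; first exact: ltr01; split; first exact: ltr01.
split; first by rewrite divr_gt0 ?rate_const_gt0 ?sqrtr_gt0.
move=> T lam g T_gt0 iter; set K := rate_const X p Dm Gm.
have -> : K / Num.sqrt (ln p%:R) * Num.sqrt (ln p%:R / T%:R) = K / Num.sqrt T%:R.
  rewrite sqrtrM ?ltW // sqrtrV //; field.
  by rewrite !gt_eqF ?sqrtr_gt0 ?ltr0n.
suff : maxL pihat phat (gbar T g) - K / Num.sqrt T%:R <= Vtilde pihat phat by lra.
apply: le_Vtilde => // w Gw.
suff : maxL pihat phat (gbar T g) <= maxL pihat phat w + K / Num.sqrt T%:R by lra.
apply: maxL_le => // l sl.
have := iteration_sqrt_regret pihat_gt0 pihat_sum1 phat_ge0 phat_sum1 p_gt0 T_gt0 iter Gw sl.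
rewrite /K /Dm /Gm; lra.
Qed.
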